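(* Let $G=(V,E,C,\ell)$ be an edge-labeled graph with exactly two categories $C=\{c_1,c_2\}$. Construct an undirected weighted graph $G'$ on node set $V'=V\cup\{s,t\}$, where $s=v_{c_1}$ and $t=v_{c_2}$ are two new terminal nodes, as follows: for each edge $\{i,j\}\in E$ with label $c=\ell(\{i,j\})$, add the three edges $\{i,j\}$, $\{v_c,i\}$, $\{v_c,j\}$, each of weight $\tfrac12$; weights of repeated edges are added. For $T\subseteq V'$ let $\mathrm{cut}(T)$ denote the total weight of edges of $G'$ with one endpoint in $T$ and the other in $V'\setminus T$. Then for every $S\subseteq V$, \[ \mathrm{cut}(S\cup\{s\})=\mathrm{CatEdgeClus}(Y_S), \] where $Y_S:V\to C$ is the clustering with $Y_S[i]=c_1$ for $i\in S$ and $Y_S[i]=c_2$ for $i\in V\setminus S$.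
   Context: An edge-labeled graph $G=(V,E,C,\ell)$ consists of a finite node set $V$, a finite collection $E$ of edges (2-element subsets of $V$), a finite set $C$ of categories, and a labeling $\ell:E\to C$. A (categorical) clustering is a map $Y:V\to C$. For $e\in E$, the mistake function is $m_Y(e)=1$ if $Y[i]\neq \ell(e)$ for some node $i\in e$, and $m_Y(e)=0$ otherwise. The Categorical Edge Clustering objective is $\mathrm{CatEdgeClus}(Y)=\sum_{e\in E} m_Y(e)$. *)

From HB Require Import structures.
From mathcomp Require Import all_boot all_order all_algebra.
Set Implicit Arguments. Unset Strict Implicit. Unset Printing Implicit Defensive.
Import Order.TTheory GRing.Theory Num.Theory.

(* An edge-labeled graph (V, E, C, l): V and C finite types; E is a finite
   collection (a sequence, so repeated edges are allowed) of labeled edges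
   ((i, j), l(e)) with i <> j. *)
Definition ledge (V C : Type) := ((V * V) * C)%type.

Definition proper_edges (V : eqType) (C : Type) (E : seq (ledge V C)) : bool :=
  all (fun e : ledge V C => e.1.1 != e.1.2) E.

Definition mistake (V C : eqType) (Y : V -> C) (e : ledge V C) : bool :=
  (Y e.1.1 != e.2) || (Y e.1.2 != e.2).

Definition CatEdgeClus (V C : eqType) (E : seq (ledge V C)) (Y : V -> C) : nat :=
  \sum_(e <- E) mistake Y e.

(* The auxiliary graph G' on V' = V + C, where the terminal v_c is inr c.
   Each labeled edge ({i,j}, c) contributes the three (unordered) edges
   {i,j}, {v_c,i}, {v_c,j}, each of weight 1/2. *)
Definition aux_edges (V C : Type) (E : seq (ledge V C)) : seq ((V + C) * (V + C)) :=
  flatten [seq [:: (inl e.1.1, inl e.1.2); (inr e.2, inl e.1.1); (inr e.2, inl e.1.2)]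
          | e <- E].

Definition aux_weight (V C : finType) (E : seq (ledge V C)) (x y : V + C) : rat :=
  \sum_(p <- aux_edges E | ((p.1 == x) && (p.2 == y)) || ((p.1 == y) && (p.2 == x)))
     (1 / 2)%R.

Definition aux_cut (V C : finType) (E : seq (ledge V C)) (T : {set V + C}) : rat :=
  (\sum_(x in T) \sum_(y in ~: T) aux_weight E x y)%R.

Definition YS (V C : finType) (c1 c2 : C) (S : {set V}) : V -> C :=
  fun i => if i \in S then c1 else c2.

From mathcomp Require Import all_boot all_order all_algebra.
Import GRing.Theory.
Set Implicit Arguments. Unset Strict Implicit.

(* The cut of G' is half the number of half-weight edges crossing it.  Each
   labeled edge ({i,j}, c) contributes the triangle {i, j, v_c}, and a
   triangle is crossed by either 0 or 2 of its edges: by 0 exactly when all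
   three vertices lie on the same side.  Since v_{c1} is on the S-side and
   v_{c2} is not, the triangle is crossed exactly when Y_S puts i or j in a
   cluster other than c, i.e. when the edge is a mistake of Y_S. *)

Section Cuts.

Variable X : finType.
Implicit Types (T : {set X}) (p : X * X).

Definition joins (x y : X) p : bool :=
  ((p.1 == x) && (p.2 == y)) || ((p.1 == y) && (p.2 == x)).

Definition crossing T p : bool := (p.1 \in T) != (p.2 \in T).

Lemma sum_eq_muln (D : {pred X}) (a : X) (F : X -> nat) :
  (\sum_(x in D) (a == x) * F x = (a \in D) * F a)%N.
Proof.
have [aD | aND] := boolP (a \in D).
  rewrite (bigD1 a) //= eqxx mul1n big1 ?addn0 // => x /andP[_ xNa].
  by rewrite eq_sym (negbTE xNa).
rewrite big1 // => x xD; case: eqP => // ax.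
by rewrite ax xD in aND.
Qed.

Lemma sum_cut_joins T p :
  (\sum_(x in T) \sum_(y in ~: T) joins x y p)%N = crossing T p.
Proof.
have joinsE x y : x \in T -> y \in ~: T ->
    joins x y p = ((p.2 == y) * (p.1 == x) + (p.1 == y) * (p.2 == x))%N :> nat.
  move=> xT; rewrite in_setC => yNT; rewrite /joins.
  case: (p.1 =P x) => [e1x|_]; case: (p.1 =P y) => [e1y|_];
    rewrite ?orbF ?mul0n ?muln0 ?mul1n ?muln1 ?addn0 //.
  by move: yNT; rewrite -e1y e1x xT.
under eq_bigr => x xT.
  rewrite (eq_bigr _ (fun y => joinsE x y xT)) big_split /= !sum_eq_muln !in_setC.
  rewrite mulnC (mulnC (p.1 \notin T)).
over.
rewrite big_split /= !sum_eq_muln /crossing.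
by case: (p.1 \in T); case: (p.2 \in T).
Qed.

Lemma sum_cut_count_joins T (s : seq (X * X)) :
  (\sum_(x in T) \sum_(y in ~: T) count (joins x y) s)%N = count (crossing T) s.
Proof.
elim: s => [|p s IHs] /=; first by rewrite !big1.
rewrite -IHs -sum_cut_joins -big_split /=.
by apply: eq_bigr => x _; rewrite -big_split.
Qed.

Lemma count_crossing_triangle T (u v w : X) :
  count (crossing T) [:: (u, v); (w, u); (w, v)]
  = (2 * (((u \in T) != (w \in T)) || ((v \in T) != (w \in T))))%N.
Proof. by rewrite /= /crossing; case: (u \in T); case: (v \in T); case: (w \in T). Qed.

End Cuts.

Lemma aux_cutE (V C : finType) (E : seq (ledge V C)) (T : {set V + C}) :
  aux_cut E T = ((count (crossing T) (aux_edges E))%:R / 2)%R.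
Proof.
rewrite /aux_cut /aux_weight -sum_cut_count_joins natr_sum mulr_suml.
apply: eq_bigr => x _; rewrite natr_sum mulr_suml; apply: eq_bigr => y _.
by rewrite big_const_seq iter_addr_0 [RHS]mulr_natl mul1r.
Qed.

Section TwoCategories.

Variables (V C : finType) (c1 c2 : C) (S : {set V}).
Hypothesis c1_neq_c2 : c1 != c2.
Hypothesis two_categories : forall c : C, c = c1 \/ c = c2.

Definition source_side : {set V + C} := inl @: S :|: [set inr c1].

Lemma inl_source_side (i : V) : (inl i \in source_side) = (i \in S).
Proof.
rewrite !inE (mem_imset _ _ (@inl_inj V C)) orbC.
by case: (_ =P _).
Qed.

Lemma inr_source_side (c : C) : (inr c \in source_side) = (c == c1).
Proof.
rewrite !inE; case: imsetP => [[i _ //]|_] /=.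
by apply/eqP/eqP => [[]|->].
Qed.

Lemma YS_neq (i : V) (c : C) : (YS c1 c2 S i != c) = ((i \in S) != (c == c1)).
Proof.
have c2_neq_c1 : (c2 == c1) = false by rewrite eq_sym (negbTE c1_neq_c2).
rewrite /YS; case: (two_categories c) => ->; case: (i \in S);
  by rewrite ?eqxx ?c2_neq_c1 ?(negbTE c1_neq_c2).
Qed.

Lemma count_crossing_aux_edges (E : seq (ledge V C)) :
  count (crossing source_side) (aux_edges E) = (2 * CatEdgeClus E (YS c1 c2 S))%N.
Proof.
rewrite /CatEdgeClus; elim: E => [|[[i j] c] E IHE]; first by rewrite big_nil.
have -> : aux_edges ((i, j, c) :: E)
    = [:: (inl i, inl j); (inr c, inl i); (inr c, inl j)] ++ aux_edges E by [].
rewrite count_cat IHE big_cons mulnDr count_crossing_triangle /mistake /=.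
by rewrite !inl_source_side inr_source_side !YS_neq.
Qed.

End TwoCategories.

Theorem mainTheorem1 (V C : finType) (c1 c2 : C) (E : seq (ledge V C)) :
  c1 != c2 -> (forall c : C, c = c1 \/ c = c2) ->
  proper_edges E ->
  forall S : {set V},
    aux_cut E ((@inl V C) @: S :|: [set inr c1]) = ((CatEdgeClus E (YS c1 c2 S))%:R)%R.
Proof.
(* Self-loops would be harmless: the triangle argument never uses i != j. *)
move=> c1_neq_c2 two_categories _ S.
rewrite -/(source_side c1 S) aux_cutE.
by rewrite (count_crossing_aux_edges S c1_neq_c2 two_categories) natrM mulrC mulKf.
Qed.
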